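(* Let $R$ be an integral domain which is degree-rigid. Then: (a) for every $n\ge 0$, $\Delta^0(R^{[n]})=R$, where $R^{[n]}$ is the polynomial ring in $n$ variables over $R$; (b) $R$ is strongly invariant.
   Context: A degree function on an integral domain $R$ is a map $\deg:R\to\mathbb{Z}\cup\{-\infty\}$ such that $\deg r=-\infty$ iff $r=0$, $\deg(rs)=\deg r+\deg s$, and $\deg(r+s)\le\max\{\deg r,\deg s\}$; it is non-negative if its values lie in $\mathbb{N}\cup\{-\infty\}$, and trivial if $\deg r=0$ for all nonzero $r$. For such a function let $\mathcal{F}_0=\{r\in R:\deg r\le 0\}$. The degree-neutral invariant $\Delta^0(R)$ is the intersection of the subrings $\mathcal{F}_0$ over all non-negative degree functions on $R$. $R$ is degree-rigid if $\Delta^0(R)=R$, i.e. every non-negative degree function on $R$ is trivial. $R$ is strongly invariant if: for any integer $n\ge 0$ and subring $S\subset R[x_1,\dots,x_n]\cong R^{[n]}$, if there exist $y_1,\dots,y_n\in R^{[n]}$ with $R[x_1,\dots,x_n]=S[y_1,\dots,y_n]$, then $R=S$. *)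

From HB Require Import structures.
From mathcomp Require Import all_boot all_order all_algebra.
Set Implicit Arguments. Unset Strict Implicit. Unset Printing Implicit Defensive.
Import Order.TTheory GRing.Theory Num.Theory.
Local Open Scope ring_scope.

(* R^{[n]} : polynomial ring in n variables over R, realised as the iterated
   univariate polynomial ring R[x_0][x_1]...[x_{n-1}]. *)
Fixpoint mpoly (R : idomainType) (n : nat) : idomainType :=
  match n with
  | 0 => R
  | n'.+1 => ({poly mpoly R n'} : idomainType)
  end.

Fixpoint mconst (R : idomainType) (n : nat) : R -> mpoly R n :=
  match n return R -> mpoly R n with
  | 0 => fun r => r
  | n'.+1 => fun r => (@mconst R n' r)%:P
  end.

(* Evaluation of p in A^{[n]} at the point (y 0, ..., y (n-1)); the variable
   x_i (i < n) is sent to y i. *)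
Fixpoint meval (A : idomainType) (n : nat) : mpoly A n -> (nat -> A) -> A :=
  match n return mpoly A n -> (nat -> A) -> A with
  | 0 => fun p _ => p
  | n'.+1 => fun p y => (map_poly (fun c => @meval A n' c y) p).[y n']
  end.

Fixpoint mcoef_in (A : idomainType) (S : A -> Prop) (n : nat) : mpoly A n -> Prop :=
  match n return mpoly A n -> Prop with
  | 0 => fun p => S p
  | n'.+1 => fun p => forall i : nat, @mcoef_in A S n' p`_i
  end.

(* Degree function.  deg 0 = -oo is encoded by only constraining deg on
   nonzero elements (the value at 0 is irrelevant). *)
Definition degree_function (R : idomainType) (deg : R -> int) : Prop :=
  (forall r s : R, r != 0 -> s != 0 -> deg (r * s) = deg r + deg s) /\
  (forall r s : R, r != 0 -> s != 0 -> r + s != 0 ->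
     deg (r + s) <= Num.max (deg r) (deg s)).

Definition nonneg_degree_function (R : idomainType) (deg : R -> int) : Prop :=
  degree_function deg /\ (forall r : R, r != 0 -> 0 <= deg r).

(* F_0 = { r : deg r <= 0 } (including r = 0, of degree -oo). *)
Definition F0 (R : idomainType) (deg : R -> int) (r : R) : Prop :=
  r = 0 \/ deg r <= 0.

Definition Delta0 (R : idomainType) (r : R) : Prop :=
  forall deg : R -> int, nonneg_degree_function deg -> F0 deg r.

Definition degree_rigid (R : idomainType) : Prop :=
  forall r : R, Delta0 r.

Definition is_subring (A : idomainType) (S : A -> Prop) : Prop :=
  S 1 /\ (forall a b, S a -> S b -> S (a - b)) /\
  (forall a b, S a -> S b -> S (a * b)).

Definition strongly_invariant (R : idomainType) : Prop :=
  forall (n : nat) (S : mpoly R n -> Prop), is_subring S ->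
  forall y : nat -> mpoly R n,
    (* R^{[n]} = S[y_0, ..., y_{n-1}] *)
    (forall p : mpoly R n, exists q : mpoly (mpoly R n) n,
        mcoef_in S q /\ meval q y = p) ->
    (* y_0, ..., y_{n-1} algebraically independent over S, i.e. S[y] = S^{[n]} *)
    (forall q : mpoly (mpoly R n) n, mcoef_in S q -> meval q y = 0 -> q = 0) ->
    (* R = S (R identified with the constants of R^{[n]}) *)
    forall p : mpoly R n, S p <-> exists r : R, p = @mconst R n r.

(* (a) A non-negative degree on A extends to A[x] in two ways: by the degree in x, and
   by Gauss's extension (the largest degree of a coefficient, multiplicative because the
   first coefficients of maximal degree multiply to the only dominant term of the
   product).  The first forces an element of Delta0(A[x]) to be a constant, the second
   forces that constant into Delta0(A); induct on n.  Conversely a non-negative degree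
   on R^[n] restricts to R, where rigidity makes it trivial.
   (b) If R^[n] = S[y] freely, taking S-coordinates is an injective ring map
   R -> S^[n]; pulling degrees back along it shows that the image of R lies in
   Delta0(S^[n]), i.e. in S by (a).  If s in S were not in R, some degree D would
   have D s > 0, so s is transcendental over R and the products s^j y^a are
   R-linearly independent.  Their number outgrows the dimension of the polynomials of
   bounded degree containing them, which contradicts linear algebra over Frac(R). *)

From HB Require Import structures.
From mathcomp Require Import all_boot all_order all_algebra.
From mathcomp Require Import zify ring.
From Stdlib Require Import Classical ClassicalEpsilon.
Import Order.TTheory GRing.Theory Num.Theory.
Set Implicit Arguments. Unset Strict Implicit. Unset Printing Implicit Defensive.
Local Open Scope ring_scope.

Section NatDegree.
Variables (A : idomainType) (e : A -> nat).
Hypothesis e0 : e 0 = 0%N.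
Hypothesis eM : forall a b : A, a != 0 -> b != 0 -> e (a * b) = (e a + e b)%N.
Hypothesis eD : forall a b : A, (e (a + b) <= maxn (e a) (e b))%N.

Lemma natdeg1 : e 1 = 0%N.
Proof. by have := eM (oner_neq0 A) (oner_neq0 A); rewrite mulr1; set x := e 1; lia. Qed.

Lemma natdegN (a : A) : e (- a) = e a.
Proof.
have N10 : (-1 : A) != 0 by rewrite oppr_eq0 oner_neq0.
have eN1 : e (-1) = 0%N by have := eM N10 N10; rewrite mulrNN mulr1 natdeg1; lia.
have [->|a0] := eqVneq a 0; first by rewrite oppr0.
by rewrite -mulN1r eM // eN1.
Qed.

Lemma natdegM_le (a b : A) : (e (a * b) <= e a + e b)%N.
Proof.
have [->|a0] := eqVneq a 0; first by rewrite mul0r e0.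
have [->|b0] := eqVneq b 0; first by rewrite mulr0 e0.
by rewrite eM.
Qed.

Lemma natdegX (a : A) k : a != 0 -> e (a ^+ k) = (k * e a)%N.
Proof.
move=> a0; elim: k => [|k IH]; first by rewrite expr0 natdeg1.
by rewrite exprS eM ?expf_neq0 // IH mulSn.
Qed.

Lemma natdegD_dominant (a b : A) :
  a != 0 -> (e b < e a)%N -> e (a + b) = e a /\ a + b != 0.
Proof.
move=> a0 lt_ba; have := eD a b; have := eD (a + b) (- b).
rewrite addrK natdegN => le1 le2.
have eab : e (a + b) = e a by lia.
by split=> //; apply: contraTneq lt_ba => ab0; rewrite -eab ab0 e0 ltn0.
Qed.

Lemma natdeg_sum_le (I : Type) (r : seq I) (P : pred I) (F : I -> A) m :
  (forall i, P i -> (e (F i) <= m)%N) -> (e (\sum_(i <- r | P i) F i) <= m)%N.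
Proof.
move=> FP; apply: (big_ind (fun x => (e x <= m)%N)) => //; first by rewrite e0.
by move=> x z ex ez; have := eD x z; lia.
Qed.

Lemma natdeg_sum_lt (I : Type) (r : seq I) (P : pred I) (F : I -> A) m :
  (forall i, P i -> (F i == 0) || (e (F i) < m)%N) ->
  (\sum_(i <- r | P i) F i == 0) || (e (\sum_(i <- r | P i) F i) < m)%N.
Proof.
move=> FP; apply: (big_ind (fun x => (x == 0) || (e x < m)%N)) => //; first by rewrite eqxx.
move=> x z /orP[/eqP->|ex]; first by rewrite add0r.
case/orP=> [/eqP->|ez]; first by rewrite addr0 ex orbT.
by apply/orP; right; have := eD x z; lia.
Qed.

Lemma natdeg_powers_free (s : A) m (c : 'I_m -> A) :
  (0 < e s)%N -> (forall j, c j != 0 -> e (c j) = 0%N) ->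
  \sum_(j < m) c j * s ^+ j = 0 -> forall j, c j = 0.
Proof.
move=> es_gt0; have s0 : s != 0 by apply: contraTneq es_gt0 => ->; rewrite e0.
elim: m c => [|m IH] c ec0; first by move=> _ [].
pose c' (j : 'I_m) := c (widen_ord (leqnSn m) j).
rewrite big_ord_recr /= => sum0.
have cm0 : c ord_max = 0.
  apply/eqP; move/eqP: sum0; apply: contraTT => cm0.
  have lead : e (c ord_max * s ^+ m) = (m * e s)%N by rewrite eM ?expf_neq0 // ec0 // natdegX.
  have rest (j : 'I_m) : (c' j * s ^+ j == 0) || (e (c' j * s ^+ j) < m * e s)%N.
    have [->|cj0] := eqVneq (c' j) 0; first by rewrite mul0r eqxx.
    by rewrite eM ?expf_neq0 // ec0 // natdegX // ltn_mul2r es_gt0 ltn_ord orbT.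
  have lead0 : c ord_max * s ^+ m != 0 by rewrite mulf_neq0 ?expf_neq0.
  have := @natdeg_sum_lt _ (index_enum _) xpredT (fun j => c' j * s ^+ j) _ (fun j _ => rest j).
  case/orP=> [/eqP->|lt_rest]; first by rewrite add0r.
  by rewrite addrC; apply: (natdegD_dominant lead0 _).2; rewrite lead.
rewrite cm0 mul0r addr0 in sum0.
have c'0 := IH c' (fun j => ec0 _) sum0.
move=> j; have [lt_jm|le_mj] := ltnP j m.
  by have := c'0 (Ordinal lt_jm); congr (c _ = _); apply: val_inj.
by rewrite (_ : j = ord_max) //; apply: val_inj => /=; have := ltn_ord j; lia.
Qed.

Definition gaussdeg (p : {poly A}) : nat := \max_(i < size p) e p`_i.

Lemma gaussdeg_coef (p : {poly A}) i : (e p`_i <= gaussdeg p)%N.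
Proof.
have [lt_ip|le_pi] := ltnP i (size p); last by rewrite nth_default // e0.
exact: (@leq_bigmax_cond _ _ (fun j : 'I_(size p) => e p`_j) (Ordinal lt_ip)).
Qed.

Lemma gaussdeg_leP (p : {poly A}) m :
  (forall i, (e p`_i <= m)%N) -> (gaussdeg p <= m)%N.
Proof. by move=> le_pm; apply/bigmax_leqP => i _. Qed.

Lemma gaussdegD (p q : {poly A}) :
  (gaussdeg (p + q) <= maxn (gaussdeg p) (gaussdeg q))%N.
Proof.
apply: gaussdeg_leP => i; rewrite coefD; apply: leq_trans (eD _ _) _.
by rewrite geq_max !leq_max !gaussdeg_coef ?orbT.
Qed.

Lemma gaussdegM_le (p q : {poly A}) :
  (gaussdeg (p * q) <= gaussdeg p + gaussdeg q)%N.
Proof.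
apply: gaussdeg_leP => i; rewrite coefM; apply: natdeg_sum_le => j _.
exact: leq_trans (natdegM_le _ _) (leq_add (gaussdeg_coef _ _) (gaussdeg_coef _ _)).
Qed.

Lemma gaussdeg_first (p : {poly A}) : p != 0 ->
  exists i, [/\ p`_i != 0, e p`_i = gaussdeg p &
    forall j, (j < i)%N -> (p`_j == 0) || (e p`_j < gaussdeg p)%N].
Proof.
move=> p0; pose P i := (p`_i != 0) && (e p`_i == gaussdeg p).
have exP : exists i, P i.
  have card_gt0 : (0 < #|'I_(size p)|)%N by rewrite card_ord size_poly_gt0.
  have [i0 Ei0] := @bigop.eq_bigmax _ (fun j : 'I_(size p) => e p`_j) card_gt0.
  have [pi0|pi0] := eqVneq p`_i0 0; last by exists i0; rewrite /P pi0 /= /gaussdeg Ei0.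
  exists (size p).-1; rewrite /P -lead_coefE lead_coef_eq0 p0 /=.
  by have := gaussdeg_coef p (size p).-1; rewrite /gaussdeg Ei0 pi0 e0 leqn0.
case: (ex_minnP exP) => i0 /andP[pi0 /eqP Ei0] min_i0.
exists i0; split=> // j lt_ji0; have [->|pj0] /= := eqVneq p`_j 0; first by [].
rewrite ltn_neqAle gaussdeg_coef andbT; apply: contraTN lt_ji0 => Ej.
by rewrite -leqNgt min_i0 // /P pj0.
Qed.

Lemma gaussdegM (p q : {poly A}) : p != 0 -> q != 0 ->
  gaussdeg (p * q) = (gaussdeg p + gaussdeg q)%N.
Proof.
move=> p0 q0; apply/eqP; rewrite eqn_leq gaussdegM_le /=.
have [i [pi Ei min_i]] := gaussdeg_first p0.
have [j [qj Ej min_j]] := gaussdeg_first q0.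
have lt_ik : (i < (i + j).+1)%N by rewrite ltnS leq_addr.
have lead : e (p`_i * q`_(i + j - i)) = (gaussdeg p + gaussdeg q)%N.
  by rewrite addKn eM // Ei Ej.
have rest : forall k : 'I_(i + j).+1, k != Ordinal lt_ik ->
    (p`_k * q`_(i + j - k) == 0) || (e (p`_k * q`_(i + j - k)) < gaussdeg p + gaussdeg q)%N.
  move=> k; rewrite -val_eqE /= => ki.
  have [->|pk] := eqVneq p`_k 0; first by rewrite mul0r eqxx.
  have [->|qk] := eqVneq q`_(i + j - k) 0; first by rewrite mulr0 eqxx.
  apply/orP; right; rewrite eM //.
  have := gaussdeg_coef p k; have := gaussdeg_coef q (i + j - k).
  case: (ltngtP k i) ki => // [lt_ki|lt_ik'] _.
    by move: (min_i _ lt_ki); rewrite (negbTE pk) /=; lia.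
  have lt_kj : (i + j - k < j)%N by have := ltn_ord k; lia.
  by move: (min_j _ lt_kj); rewrite (negbTE qk) /=; lia.
have := gaussdeg_coef (p * q) (i + j); rewrite coefM (bigD1 (Ordinal lt_ik)) //=.
have ab0 : p`_i * q`_(i + j - i) != 0 by rewrite addKn mulf_neq0.
have := @natdeg_sum_lt _ (index_enum _) (fun k => k != Ordinal lt_ik)
  (fun k : 'I_(i + j).+1 => p`_k * q`_(i + j - k)) _ rest.
case/orP=> [/eqP->|lt]; first by rewrite addr0 lead.
by rewrite -lead in lt; have [-> _] := natdegD_dominant ab0 lt; rewrite lead.
Qed.

End NatDegree.

Section NatDegreeOf.
Variables (A : idomainType) (deg : A -> int).
Hypothesis deg_nonneg : nonneg_degree_function deg.

(* The value of [deg] at 0 is junk; [natdeg_of] sends 0 to 0. *)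
Definition natdeg_of (a : A) : nat := if a == 0 then 0%N else `|deg a|%N.

Lemma natdeg_ofE (a : A) : a != 0 -> (natdeg_of a)%:Z = deg a.
Proof.
move=> a0; rewrite /natdeg_of (negbTE a0) gez0_abs //.
by case: deg_nonneg => _ /(_ a a0).
Qed.

Lemma natdeg_of0 : natdeg_of 0 = 0%N.
Proof. by rewrite /natdeg_of eqxx. Qed.

Lemma natdeg_ofM (a b : A) : a != 0 -> b != 0 ->
  natdeg_of (a * b) = (natdeg_of a + natdeg_of b)%N.
Proof.
move=> a0 b0; apply/eqP; rewrite -eqz_nat PoszD !natdeg_ofE ?mulf_neq0 //.
by case: deg_nonneg => -[DM _] _; rewrite DM.
Qed.

Lemma natdeg_ofD (a b : A) :
  (natdeg_of (a + b) <= maxn (natdeg_of a) (natdeg_of b))%N.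
Proof.
have [->|ab0] := eqVneq (a + b) 0; first by rewrite natdeg_of0.
have [->|a0] := eqVneq a 0; first by rewrite add0r leq_max leqnn orbT.
have [->|b0] := eqVneq b 0; first by rewrite addr0 leq_max leqnn.
have := (proj2 (proj1 deg_nonneg)) a b a0 b0 ab0.
by rewrite -!natdeg_ofE // le_max !lez_nat leq_max.
Qed.

Lemma degree_powers_free (s : A) m (c : 'I_m -> A) :
  s != 0 -> 0 < deg s -> (forall j, c j != 0 -> deg (c j) = 0) ->
  \sum_(j < m) c j * s ^+ j = 0 -> forall j, c j = 0.
Proof.
move=> s0 Ds_gt0 Dc0; apply: (natdeg_powers_free natdeg_of0 natdeg_ofM natdeg_ofD).
  by rewrite -ltz_nat natdeg_ofE.
by move=> j cj0; apply/eqP; rewrite -eqz_nat natdeg_ofE // Dc0.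
Qed.

Definition gauss_degree (p : {poly A}) : int := (gaussdeg natdeg_of p)%:Z.

Lemma gauss_degree_nonneg : nonneg_degree_function gauss_degree.
Proof.
have gaussdegM' := gaussdegM natdeg_of0 natdeg_ofM natdeg_ofD.
split; last by move=> p _; rewrite lez_nat.
split=> [p q p0 q0|p q _ _ _]; first by rewrite /gauss_degree gaussdegM'.
by rewrite /gauss_degree le_max !lez_nat -leq_max (gaussdegD natdeg_of0 natdeg_ofD).
Qed.

Lemma gauss_degreeC (c : A) : gauss_degree c%:P = (natdeg_of c)%:Z.
Proof.
rewrite /gauss_degree /gaussdeg size_polyC; have [->|c0] := eqVneq c 0.
  by rewrite big_ord0 natdeg_of0.
by rewrite big_ord1 coefC.
Qed.

End NatDegreeOf.

Definition size_degree (A : idomainType) (p : {poly A}) : int := (size p).-1%:Z.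

Lemma size_degree_nonneg (A : idomainType) : nonneg_degree_function (@size_degree A).
Proof.
split; last by move=> p _; rewrite lez_nat.
split=> [p q p0 q0|p q _ _ _]; rewrite /size_degree.
  by rewrite size_mul // -PoszD; congr Posz; move: p0 q0; rewrite -!size_poly_gt0; lia.
rewrite le_max !lez_nat -leq_max; have := size_polyD p q.
by move: (size (p + q)) (size p) (size q); lia.
Qed.

Lemma nonneg_degree_comp (A B : idomainType) (f : A -> B) (D : B -> int) :
  {morph f : a b / a + b} -> {morph f : a b / a * b} ->
  (forall a, f a = 0 -> a = 0) ->
  nonneg_degree_function D -> nonneg_degree_function (D \o f).
Proof.
move=> fD fM f_eq0 [[DM DD] D_ge0].
have fnz a : a != 0 -> f a != 0 by apply: contra_neq => /f_eq0.
split=> [|a /fnz]; last exact: D_ge0.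
split=> [a b a0 b0|a b a0 b0 ab0] /=; first by rewrite fM DM ?fnz.
by rewrite fD DD ?fnz // -fD fnz.
Qed.

Section MConst.
Variables (A : idomainType) (n : nat).

Lemma mconstD : {morph @mconst A n : a b / a + b}.
Proof. by elim: n => //= m IH a b; rewrite IH polyCD. Qed.

Lemma mconstM : {morph @mconst A n : a b / a * b}.
Proof. by elim: n => //= m IH a b; rewrite IH polyCM. Qed.

Lemma mconst0 : mconst n (0 : A) = 0.
Proof. by elim: n => //= m ->. Qed.

Lemma mconst1 : mconst n (1 : A) = 1.
Proof. by elim: n => //= m ->. Qed.

Lemma mconst_eq0 (a : A) : mconst n a = 0 -> a = 0.
Proof. by elim: n => //= m IH /eqP; rewrite polyC_eq0 => /eqP. Qed.

Lemma mconst_neq0 (a : A) : a != 0 -> mconst n a != 0.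
Proof. by apply: contra_neq => /mconst_eq0. Qed.

End MConst.

Lemma Delta0_mpoly_const (A : idomainType) n (p : mpoly A n) :
  Delta0 p -> exists r, p = mconst n r.
Proof.
elim: n p => [|n IH] p Dp; first by exists p.
have size_p : (size (p : {poly mpoly A n}) <= 1)%N.
  case: (Dp _ (@size_degree_nonneg (mpoly A n))) => [->|]; first by rewrite size_poly0.
  by rewrite lez_nat; lia.
have Ep := size1_polyC size_p.
suff [r Er] : exists r, (p : {poly mpoly A n})`_0 = mconst n r by exists r; rewrite [p]Ep Er.
apply: IH => deg deg_nonneg; rewrite /F0.
have [->|p00] := eqVneq (p : {poly mpoly A n})`_0 0; first by left.
case: (Dp _ (gauss_degree_nonneg deg_nonneg)) => [p0|]; first by left; rewrite p0 coef0.
rewrite [X in gauss_degree _ X]Ep gauss_degreeC lez_nat leqn0 => /eqP p00_deg.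
by right; rewrite -natdeg_ofE // p00_deg.
Qed.

Lemma degree_rigid_mconst (R : idomainType) n (D : mpoly R n -> int) (r : R) :
  degree_rigid R -> nonneg_degree_function D -> r != 0 -> D (mconst n r) = 0.
Proof.
move=> rigid_R D_nonneg r0.
have D_mconst_nonneg := nonneg_degree_comp (@mconstD R n) (@mconstM R n)
  (@mconst_eq0 R n) D_nonneg.
case: (rigid_R r _ D_mconst_nonneg) => [/eqP|D_le0]; first by rewrite (negbTE r0).
apply/eqP; rewrite eq_le D_le0; case: D_nonneg => _; apply.
exact: mconst_neq0.
Qed.

Lemma Delta0_mpoly (R : idomainType) n (p : mpoly R n) :
  degree_rigid R -> Delta0 p <-> exists r, p = mconst n r.
Proof.
move=> rigid_R; split; first exact: Delta0_mpoly_const.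
case=> r -> D D_nonneg; rewrite /F0.
have [->|r0] := eqVneq r 0; first by left; rewrite mconst0.
by right; rewrite (degree_rigid_mconst rigid_R D_nonneg r0).
Qed.

Section MEval.
Variables (A : idomainType) (y : nat -> A).

Lemma meval_rmorphism n : exists g : {rmorphism mpoly A n -> A}, g =1 fun p => meval p y.
Proof.
elim: n => [|n [g Eg]]; first by exists idfun.
have cgy : commr_rmorph g (y n) by move=> x; rewrite /GRing.comm mulrC.
by exists (horner_morph cgy) => p; rewrite /= -(eq_map_poly Eg).
Qed.

Lemma mevalD n (p q : mpoly A n) : meval (p + q) y = meval p y + meval q y.
Proof. by have [g Eg] := meval_rmorphism n; rewrite -!Eg rmorphD. Qed.

Lemma mevalB n (p q : mpoly A n) : meval (p - q) y = meval p y - meval q y.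
Proof. by have [g Eg] := meval_rmorphism n; rewrite -!Eg rmorphB. Qed.

Lemma mevalM n (p q : mpoly A n) : meval (p * q) y = meval p y * meval q y.
Proof. by have [g Eg] := meval_rmorphism n; rewrite -!Eg rmorphM. Qed.

Lemma meval0 n : meval (0 : mpoly A n) y = 0.
Proof. by have [g Eg] := meval_rmorphism n; rewrite -Eg rmorph0. Qed.

Lemma meval_sum n (I : Type) (r : seq I) (P : pred I) (F : I -> mpoly A n) :
  meval (\sum_(i <- r | P i) F i) y = \sum_(i <- r | P i) meval (F i) y.
Proof. by apply: (big_morph _ (@mevalD n)); exact: meval0. Qed.

Lemma meval_polyC n (c : mpoly A n) : meval (c%:P : mpoly A n.+1) y = meval c y.
Proof.
by have [g Eg] := meval_rmorphism n; rewrite /= -(eq_map_poly Eg) map_polyC hornerC; exact: Eg.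
Qed.

Lemma meval_Xn n k : meval ('X^k : mpoly A n.+1) y = y n ^+ k.
Proof.
by have [g Eg] := meval_rmorphism n; rewrite /= -(eq_map_poly Eg) map_polyXn hornerXn.
Qed.

Lemma meval_mconst n (a : A) : meval (mconst n a) y = a.
Proof. by elim: n => //= n IH; rewrite -[RHS]IH -meval_polyC. Qed.

End MEval.

Fixpoint mmonomial (A : idomainType) (n : nat) (a : nat -> nat) : mpoly A n :=
  match n return mpoly A n with
  | 0 => 1
  | n'.+1 => (@mmonomial A n' a)%:P * 'X^(a n')
  end.

Lemma meval_mmonomial (A : idomainType) (y : nat -> A) n a :
  meval (mmonomial A n a) y = \prod_(i < n) y i ^+ a i.
Proof.
elim: n => [|n IH]; first by rewrite big_ord0.
by rewrite mevalM meval_polyC IH meval_Xn big_ord_recr.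
Qed.

Section MCoefIn.
Variables (A : idomainType) (S : A -> Prop).
Hypothesis S_subring : is_subring S.

Lemma subring1 : S 1.
Proof. by case: S_subring. Qed.

Lemma subringB a b : S a -> S b -> S (a - b).
Proof. by case: S_subring => _ [SB _]; apply: SB. Qed.

Lemma subringM a b : S a -> S b -> S (a * b).
Proof. by case: S_subring => _ [_ SM]; apply: SM. Qed.

Lemma subring0 : S 0.
Proof. by rewrite -(subrr 1); apply: subringB; exact: subring1. Qed.

Lemma subringD a b : S a -> S b -> S (a + b).
Proof.
move=> Sa Sb; rewrite -[b]opprK -[- b]sub0r.
by apply: subringB => //; apply: subringB => //; exact: subring0.
Qed.

Lemma subring_sum (I : Type) (r : seq I) (P : pred I) (F : I -> A) :
  (forall i, P i -> S (F i)) -> S (\sum_(i <- r | P i) F i).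
Proof. by move=> SF; apply: big_ind => //; [exact: subring0|exact: subringD]. Qed.

Lemma subringX a k : S a -> S (a ^+ k).
Proof.
move=> Sa; elim: k => [|k IH]; first by rewrite expr0; exact: subring1.
by rewrite exprS; apply: subringM.
Qed.

Lemma mcoef_in0 n : mcoef_in S (0 : mpoly A n).
Proof. by elim: n => [|n IH] /=; [exact: subring0|move=> i; rewrite coef0]. Qed.

Lemma mcoef_inD n (p q : mpoly A n) :
  mcoef_in S p -> mcoef_in S q -> mcoef_in S (p + q).
Proof.
elim: n p q => [|n IH] p q /=; first exact: subringD.
by move=> Sp Sq i; rewrite coefD; apply: IH.
Qed.

Lemma mcoef_inB n (p q : mpoly A n) :
  mcoef_in S p -> mcoef_in S q -> mcoef_in S (p - q).
Proof.
elim: n p q => [|n IH] p q /=; first exact: subringB.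
by move=> Sp Sq i; rewrite coefB; apply: IH.
Qed.

Lemma mcoef_in_sum n (I : Type) (r : seq I) (P : pred I) (F : I -> mpoly A n) :
  (forall i, P i -> mcoef_in S (F i)) -> mcoef_in S (\sum_(i <- r | P i) F i).
Proof. by move=> SF; apply: big_ind => //; [exact: mcoef_in0|exact: mcoef_inD]. Qed.

Lemma mcoef_inM n (p q : mpoly A n) :
  mcoef_in S p -> mcoef_in S q -> mcoef_in S (p * q).
Proof.
elim: n p q => [|n IH] p q /=; first exact: subringM.
by move=> Sp Sq i; rewrite coefM; apply: mcoef_in_sum => j _; apply: IH.
Qed.

Lemma mcoef_in_mconst n (a : A) : mcoef_in S (mconst n a) <-> S a.
Proof.
elim: n => [//|n IH] /=; split=> [/(_ 0%N)|Sa i]; first by rewrite coefC eqxx => /IH.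
by rewrite coefC; case: eqP => _; [exact/IH|exact: mcoef_in0].
Qed.

Lemma mcoef_in_mmonomial n a : mcoef_in S (mmonomial A n a).
Proof.
elim: n => [|n IH] /=; first exact: subring1.
move=> i; rewrite coefCM coefXn; case: eqP => _; last by rewrite mulr0; exact: mcoef_in0.
by rewrite mulr1.
Qed.

End MCoefIn.

Section MCoeff.
Variable A : idomainType.

(* Coefficient of x_0^(a 0) ... x_(n-1)^(a (n-1)); values of [a] beyond n are ignored. *)
Fixpoint mcoeff (n : nat) : mpoly A n -> (nat -> nat) -> A :=
  match n return mpoly A n -> (nat -> nat) -> A with
  | 0 => fun p _ => p
  | n'.+1 => fun p a => @mcoeff n' p`_(a n') a
  end.

Lemma mcoeff0 n a : mcoeff (0 : mpoly A n) a = 0.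
Proof. by elim: n => //= n IH; rewrite coef0. Qed.

Lemma mcoeffD n (p q : mpoly A n) a : mcoeff (p + q) a = mcoeff p a + mcoeff q a.
Proof. by elim: n p q => //= n IH p q; rewrite coefD IH. Qed.

Lemma mcoeff_sum n (I : Type) (r : seq I) (P : pred I) (F : I -> mpoly A n) a :
  mcoeff (\sum_(i <- r | P i) F i) a = \sum_(i <- r | P i) mcoeff (F i) a.
Proof. by apply: (big_morph _ (fun p q => mcoeffD p q a)); exact: mcoeff0. Qed.

Lemma mcoeff_mconstM n (c : A) (p : mpoly A n) a :
  mcoeff (mconst n c * p) a = c * mcoeff p a.
Proof. by elim: n p => //= n IH p; rewrite coefCM IH. Qed.

Lemma eq_mcoeff n (p : mpoly A n) a b :
  (forall i, (i < n)%N -> a i = b i) -> mcoeff p a = mcoeff p b.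
Proof.
elim: n p => //= n IH p eq_ab; rewrite eq_ab // IH // => i lt_in.
by apply: eq_ab; lia.
Qed.

Lemma mcoeff_mmonomial n a b :
  mcoeff (mmonomial A n a) b = if [forall i : 'I_n, a i == b i] then 1 else 0.
Proof.
elim: n => [|n IH] /=; first by case: forallP => // nall; case: nall => -[].
rewrite coefCM coefXn; have [Eba|neq_ba] := eqVneq (b n) (a n); last first.
  rewrite mulr0 mcoeff0; case: forallP => // all_ab.
  by rewrite (eqP (all_ab ord_max)) eqxx in neq_ba.
rewrite mulr1 IH; congr (if _ then _ else _); apply/forallP/forallP => all_ab i.
  have [lt_in|] := ltnP i n; first exact: (all_ab (Ordinal lt_in)).
  move=> le_ni; have -> : nat_of_ord i = n.
    by apply/eqP; rewrite eqn_leq le_ni andbT -ltnS ltn_ord.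
  by rewrite Eba.
exact: (all_ab (widen_ord (leqnSn n) i)).
Qed.

Fixpoint mbounded (n : nat) (L : nat) : mpoly A n -> Prop :=
  match n return mpoly A n -> Prop with
  | 0 => fun _ => True
  | n'.+1 => fun p => (size p <= L.+1)%N /\ forall i, @mbounded n' L p`_i
  end.

Lemma mbounded0 n L : mbounded L (0 : mpoly A n).
Proof. by elim: n => //= n IH; rewrite size_poly0; split=> // i; rewrite coef0. Qed.

Lemma mboundedD n L (p q : mpoly A n) :
  mbounded L p -> mbounded L q -> mbounded L (p + q).
Proof.
elim: n p q => //= n IH p q [sp bp] [sq bq]; split=> [|i]; last by rewrite coefD; apply: IH.
by apply: leq_trans (size_polyD _ _) _; rewrite geq_max sp sq.
Qed.

Lemma mbounded_sum n L (I : Type) (r : seq I) (P : pred I) (F : I -> mpoly A n) :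
  (forall i, P i -> mbounded L (F i)) -> mbounded L (\sum_(i <- r | P i) F i).
Proof. by move=> bF; apply: big_ind => //; [exact: mbounded0|exact: mboundedD]. Qed.

Lemma mbounded_le n L L' (p : mpoly A n) : (L <= L')%N -> mbounded L p -> mbounded L' p.
Proof.
move=> le_LL'; elim: n p => //= n IH p [sp bp]; split=> [|i]; last exact: IH.
exact: leq_trans sp _.
Qed.

Lemma mboundedM n L L' (p q : mpoly A n) :
  mbounded L p -> mbounded L' q -> mbounded (L + L') (p * q).
Proof.
elim: n p q => //= n IH p q [sp bp] [sq bq]; split=> [|i].
  by have := size_polyMleq p q; move: sp sq; move: (size p) (size q) (size (p * q)); lia.
by rewrite coefM; apply: mbounded_sum => j _; apply: IH.
Qed.

Lemma mbounded_mconst n (c : A) : mbounded 0 (mconst n c).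
Proof.
elim: n => //= n IH; split=> [|i]; first by rewrite size_polyC leq_b1.
by rewrite coefC; case: eqP => _ //; exact: mbounded0.
Qed.

Lemma mbounded1 n : mbounded 0 (1 : mpoly A n).
Proof. by rewrite -(mconst1 A n); exact: mbounded_mconst. Qed.

Lemma mboundedX n L (p : mpoly A n) k : mbounded L p -> mbounded (k * L) (p ^+ k).
Proof.
move=> bp; elim: k => [|k IH]; first exact: mbounded1.
by rewrite exprS mulSn; apply: mboundedM.
Qed.

Lemma mbounded_prod n L m (F : 'I_m -> mpoly A n) :
  (forall i, mbounded L (F i)) -> mbounded (m * L) (\prod_(i < m) F i).
Proof.
elim: m F => [|m IH] F bF; first by rewrite big_ord0; exact: mbounded1.
by rewrite big_ord_recr mulSn addnC; apply: mboundedM => [|//]; apply: IH.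
Qed.

Lemma mbounded_uniform n (F : nat -> mpoly A n) m :
  (forall i, (i < m)%N -> exists L, mbounded L (F i)) ->
  exists L, forall i, (i < m)%N -> mbounded L (F i).
Proof.
elim: m => [|m IH] bF; first by exists 0%N.
have [L bL] := IH (fun i lt_im => bF i (ltnW lt_im)).
have [L' bL'] := bF m (ltnSn m); exists (maxn L L') => i lt_im.
have [lt_i|ge_i] := ltnP i m; first by apply: mbounded_le (bL i lt_i); rewrite leq_maxl.
by rewrite (_ : i = m); [apply: mbounded_le bL'; rewrite leq_maxr|lia].
Qed.

Lemma mbounded_exists n (p : mpoly A n) : exists L, mbounded L p.
Proof.
elim: n p => [|n IH] p; first by exists 0%N.
have [L bL] := @mbounded_uniform n (fun i => p`_i) (size p) (fun i _ => IH p`_i).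
exists (maxn L (size p)); split=> [|i]; first by rewrite ltnW // ltnS leq_maxr.
have [lt_i|ge_i] := ltnP i (size p); first by apply: mbounded_le (bL i lt_i); rewrite leq_maxl.
by rewrite nth_default //; exact: mbounded0.
Qed.

Lemma mbounded_eq0 n L (p : mpoly A n) : mbounded L p ->
  (forall a, (forall i, (i < n)%N -> (a i <= L)%N) -> mcoeff p a = 0) -> p = 0.
Proof.
elim: n p => [|n IH] p; first by move=> _ /(_ (fun _ => 0%N)); apply.
move=> /= [sp bp] p_coef; apply/polyP => i; rewrite coef0.
have [le_iL|lt_Li] := leqP i L; last by rewrite nth_default // (leq_trans sp).
apply: IH (bp i) _ => a le_aL.
have := p_coef (fun k => if k == n then i else a k); rewrite eqxx => <-.
  by apply: eq_mcoeff => k lt_kn; rewrite ifN // neq_ltn lt_kn.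
by move=> k; case: eqP => // neq_kn lt_kn; apply: le_aL; lia.
Qed.

End MCoeff.

Section FractionClearing.
Variable R : idomainType.
Local Notation tofrac := (@FracField.tofrac R).

Lemma tofrac_denom (x : {fraction R}) :
  exists b : R, b != 0 /\ exists a, x * tofrac b = tofrac a.
Proof.
elim/quotW: x => r; exists (\d_r); split; first exact: denom_ratioP.
exists (\n_r); unlock tofrac; rewrite !piE; apply/eqmodP.
rewrite /= FracField.equivfE /FracField.mulf.
by rewrite !numden_Ratio ?(oner_neq0, mulf_neq0, denom_ratioP) //; apply/eqP; ring.
Qed.

Lemma map_mx_tofrac_inj m n : injective (map_mx tofrac : 'M[R]_(m, n) -> 'M_(m, n)).
Proof.
move=> A B /matrixP eqAB; apply/matrixP => i j.
by have := eqAB i j; rewrite !mxE => /eqP; rewrite tofrac_eq => /eqP.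
Qed.

Lemma row_tofrac_denom m (u : 'rV[{fraction R}]_m) :
  exists2 c : R, c != 0 & exists w : 'rV[R]_m, tofrac c *: u = map_mx tofrac w.
Proof.
have [ab Hab] : exists ab : 'I_m -> R * R,
    forall k, (ab k).2 != 0 /\ u 0 k * tofrac (ab k).2 = tofrac (ab k).1.
  have ab_k : forall k, exists ab : R * R, ab.2 != 0 /\ u 0 k * tofrac ab.2 = tofrac ab.1.
    by move=> k; have [b [b0 [a Eab]]] := tofrac_denom (u 0 k); exists (a, b).
  exact: (fin_all_exists ab_k).
exists (\prod_k (ab k).2); first by apply/prodf_neq0 => k _; case: (Hab k).
exists (\row_k ((ab k).1 * \prod_(k' | k' != k) (ab k').2)).
apply/rowP => k; rewrite !mxE (bigD1 k) //= !tofracM rmorph_prod -(proj2 (Hab k)).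
by rewrite mulrC mulrA.
Qed.

Lemma idomain_left_kernel m N (M : 'M[R]_(m, N)) :
  (N < m)%N -> exists2 w : 'rV[R]_m, w != 0 & w *m M = 0.
Proof.
move=> lt_Nm; pose Mf := map_mx tofrac M.
have [u u0 uMf0] : exists2 u : 'rV_m, u != 0 & u *m Mf = 0.
  have K0 : kermx Mf != 0.
    by rewrite -mxrank_eq0 mxrank_ker subn_eq0 -ltnNge (leq_ltn_trans (rank_leq_col Mf)).
  have /existsP[i rowi0] : [exists i, row i (kermx Mf) != 0].
    rewrite -negb_forall; apply: contra K0 => /forallP rows0.
    by apply/eqP/row_matrixP => i; rewrite row0; exact/eqP.
  by exists (row i (kermx Mf)) => //; rewrite -row_mul mulmx_ker row0.
have [c c0 [w Ew]] := row_tofrac_denom u.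
exists w.
  apply: contraNneq u0 => w0; rewrite w0 map_mx0 in Ew.
  by move/eqP: Ew; rewrite scaler_eq0 tofrac_eq0 (negbTE c0).
apply: map_mx_tofrac_inj; rewrite map_mxM -Ew -scalemxAl uMf0 scaler0.
by apply/matrixP => i j; rewrite !mxE tofrac0.
Qed.

End FractionClearing.

Definition natfun_of_ffun n K (f : {ffun 'I_n -> 'I_K}) (k : nat) : nat :=
  if @insub _ (fun k => (k < n)%N) 'I_n k is Some i then f i else 0%N.

Lemma natfun_of_ffunE n K (f : {ffun 'I_n -> 'I_K}) (i : 'I_n) : natfun_of_ffun f i = f i.
Proof. by rewrite /natfun_of_ffun valK. Qed.

Lemma mbounded_dependent (A : idomainType) n L (I : finType) (F : I -> mpoly A n) :
  (forall i, mbounded L (F i)) -> (L.+1 ^ n < #|I|)%N ->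
  exists c : I -> A, (exists i, c i != 0) /\ \sum_i mconst n (c i) * F i = 0.
Proof.
move=> bF lt_dim.
pose J := {ffun 'I_n -> 'I_L.+1}.
pose M : 'M[A]_(#|I|, #|J|) :=
  \matrix_(k, j) mcoeff (F (enum_val k)) (natfun_of_ffun (enum_val j)).
have [w w0 wM0] : exists2 w : 'rV_#|I|, w != 0 & w *m M = 0.
  by apply: idomain_left_kernel; rewrite card_ffun !card_ord.
exists (fun i => w 0 (enum_rank i)); split.
  have /existsP[k wk0] : [exists k, w 0 k != 0].
    rewrite -negb_forall; apply: contra w0 => /forallP w_0.
    by apply/eqP/rowP => k; rewrite mxE; exact/eqP.
  by exists (enum_val k); rewrite enum_valK.
apply: (@mbounded_eq0 _ _ L) => [|a le_aL].
  apply: mbounded_sum => i _; rewrite -[L]add0n.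
  by apply: mboundedM => //; exact: mbounded_mconst.
pose j : J := [ffun i : 'I_n => inord (a i)].
have Ej : forall p : mpoly A n, mcoeff p a = mcoeff p (natfun_of_ffun j).
  move=> p; apply: eq_mcoeff => i lt_in.
  by rewrite -[i]/(nat_of_ord (Ordinal lt_in)) natfun_of_ffunE ffunE inordK // ltnS le_aL.
rewrite Ej mcoeff_sum; transitivity ((w *m M) 0 (enum_rank j)); last by rewrite wM0 mxE.
rewrite mxE (reindex (enum_val : 'I_#|I| -> I)) /=; last exact/onW_bij/enum_val_bij.
by apply: eq_bigr => k _; rewrite mcoeff_mconstM enum_valK mxE enum_rankK.
Qed.

Lemma monomial_count E n : ((E.+1 ^ n * E).+1 ^ n < (E.+1 ^ n).+1 ^ n.+1)%N.
Proof.
case: n => [|n]; first by rewrite !expn0 expn1.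
set M := (E.+1 ^ n.+1)%N; apply: (@leq_ltn_trans ((M.+1 * E.+1) ^ n.+1)).
  by rewrite leq_exp2r //; nia.
by rewrite expnMn -/M [in X in (_ < X)%N]expnS mulnC ltn_pmul2r ?expn_gt0.
Qed.

Section StronglyInvariant.
Variables (R : idomainType) (n : nat) (S : mpoly R n -> Prop) (y : nat -> mpoly R n).
Hypothesis rigid_R : degree_rigid R.
Hypothesis S_subring : is_subring S.
Hypothesis S_gen : forall p : mpoly R n, exists q : mpoly (mpoly R n) n,
  mcoef_in S q /\ meval q y = p.
Hypothesis S_free : forall q : mpoly (mpoly R n) n, mcoef_in S q -> meval q y = 0 -> q = 0.

Definition scoord (p : mpoly R n) : mpoly (mpoly R n) n :=
  proj1_sig (constructive_indefinite_description _ (S_gen p)).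

Lemma scoordP p : mcoef_in S (scoord p) /\ meval (scoord p) y = p.
Proof. exact: proj2_sig (constructive_indefinite_description _ (S_gen p)). Qed.

Lemma scoord_unique p q : mcoef_in S q -> meval q y = p -> scoord p = q.
Proof.
move=> Sq Eq; have [Sp Ep] := scoordP p; apply/eqP; rewrite -subr_eq0; apply/eqP.
by apply: S_free; [exact: mcoef_inB|rewrite mevalB Ep Eq subrr].
Qed.

Lemma scoordD : {morph scoord : p q / p + q}.
Proof.
move=> p q; have [Sp Ep] := scoordP p; have [Sq Eq] := scoordP q.
by apply: scoord_unique; [exact: mcoef_inD|rewrite mevalD Ep Eq].
Qed.

Lemma scoordM : {morph scoord : p q / p * q}.
Proof.
move=> p q; have [Sp Ep] := scoordP p; have [Sq Eq] := scoordP q.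
by apply: scoord_unique; [exact: mcoef_inM|rewrite mevalM Ep Eq].
Qed.

Lemma scoord_eq0 p : scoord p = 0 -> p = 0.
Proof. by move=> sp0; have [_ <-] := scoordP p; rewrite sp0 meval0. Qed.

Lemma mconst_in_S (r : R) : S (mconst n r).
Proof.
pose f := scoord \o mconst n.
have fD : {morph f : a b / a + b} by move=> a b; rewrite /f /= mconstD scoordD.
have fM : {morph f : a b / a * b} by move=> a b; rewrite /f /= mconstM scoordM.
have f_eq0 a : f a = 0 -> a = 0 by move/scoord_eq0/mconst_eq0.
have [b Eb] : exists b, scoord (mconst n r) = mconst n b.
  apply: Delta0_mpoly_const => D D_nonneg.
  case: (rigid_R r (nonneg_degree_comp fD fM f_eq0 D_nonneg)) => [->|]; last by right.
  by left; rewrite mconst0; apply: scoord_unique; [exact: mcoef_in0|exact: meval0].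
have [Sb Eb'] := scoordP (mconst n r); rewrite Eb meval_mconst in Sb Eb'.
by rewrite -Eb'; apply/(mcoef_in_mconst S_subring n).
Qed.

Lemma S_monomials_free (s : mpoly R n) (D : mpoly R n -> int) K
    (c : 'I_K * {ffun 'I_n -> 'I_K} -> R) :
  S s -> nonneg_degree_function D -> s != 0 -> 0 < D s ->
  \sum_i mconst n (c i) * (s ^+ i.1 * \prod_(o < n) y o ^+ i.2 o) = 0 ->
  forall i, c i = 0.
Proof.
move=> Ss D_nonneg s0 Ds_gt0 sum0 [j a].
pose b a := \sum_(j < K) mconst n (c (j, a)) * s ^+ j.
pose Q := \sum_a @mconst (mpoly R n) n (b a) * mmonomial _ n (natfun_of_ffun a).
have SQ : mcoef_in S Q.
  apply: (mcoef_in_sum S_subring) => a' _.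
  apply: (mcoef_inM S_subring); last exact: (mcoef_in_mmonomial S_subring).
  apply/(mcoef_in_mconst S_subring); apply: (subring_sum S_subring) => j' _.
  by apply: (subringM S_subring); [exact: mconst_in_S|exact: subringX].
have Q0 : Q = 0.
  apply: S_free SQ _; rewrite meval_sum -{}[RHS]sum0 (eq_bigr (fun a' =>
    \sum_(j' < K) mconst n (c (j', a')) * (s ^+ j' * \prod_(o < n) y o ^+ a' o))).
    by rewrite exchange_big pair_bigA; apply: eq_bigr => -[].
  move=> a' _; rewrite mevalM meval_mconst meval_mmonomial mulr_suml.
  apply: eq_bigr => j' _; rewrite -mulrA; congr (_ * (_ * _)).
  by apply: eq_bigr => o _; rewrite natfun_of_ffunE.
have b0 : b a = 0.
  have := congr1 (fun q => mcoeff q (natfun_of_ffun a)) Q0.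
  rewrite mcoeff0 mcoeff_sum (bigD1 a) //= big1 ?addr0 => [|a' neq_a'].
    by rewrite mcoeff_mconstM mcoeff_mmonomial; case: forallP => [_|[]//]; rewrite mulr1.
  rewrite mcoeff_mconstM mcoeff_mmonomial; case: forallP => [eq_a'a|_]; last exact: mulr0.
  case/eqP: neq_a'; apply/ffunP => o; apply: val_inj.
  by have := eq_a'a o; rewrite !natfun_of_ffunE => /eqP.
apply: (@mconst_eq0 _ n); apply: (degree_powers_free D_nonneg s0 Ds_gt0 _ b0).
move=> j' cj0; apply: (degree_rigid_mconst rigid_R D_nonneg).
by apply: contra_neq cj0 => ->; rewrite mconst0.
Qed.

Lemma S_mconst (s : mpoly R n) : S s -> exists r, s = mconst n r.
Proof.
move=> Ss; apply: NNPP => not_const.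
have [D [D_nonneg s0 Ds_gt0]] : exists D, [/\ nonneg_degree_function D, s != 0 & 0 < D s].
  have not_Delta0 : ~ Delta0 s by move/Delta0_mpoly_const.
  have [D not_imp] := not_all_ex_not _ _ not_Delta0.
  have [D_nonneg notF0] := imply_to_and _ _ not_imp.
  exists D; split=> //; first by apply/eqP => s0; apply: notF0; left.
  by rewrite ltNge; apply/negP => Ds_le0; apply: notF0; right.
have [ds bs] := mbounded_exists s.
have [dy by_] := @mbounded_uniform _ n y n (fun i _ => mbounded_exists (y i)).
(* Every s ^+ j * y ^ a with j, a_i <= M has degree at most M * E in each variable,
   and (M + 1) ^ (n + 1) such products exceed the (M * E + 1) ^ n monomials of that size. *)
pose E := (ds + n * dy)%N; pose M := (E.+1 ^ n)%N.
pose I := ('I_M.+1 * {ffun 'I_n -> 'I_M.+1})%type.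
pose F (i : I) := s ^+ i.1 * \prod_(o < n) y o ^+ i.2 o.
have bF (i : I) : mbounded (M * E) (F i).
  have by_M (o : 'I_n) : mbounded (M * dy) (y o ^+ i.2 o).
    apply: mbounded_le (mboundedX _ (by_ o (ltn_ord o))).
    by rewrite leq_mul2r -ltnS ltn_ord orbT.
  apply: mbounded_le (mboundedM (mboundedX i.1 bs) (mbounded_prod by_M)).
  by have := ltn_ord i.1; rewrite /E; nia.
have card_I : ((M * E).+1 ^ n < #|{: I}|)%N.
  by rewrite card_prod card_ffun !card_ord -expnS; exact: monomial_count.
have [c [[i ci0] sum0]] := mbounded_dependent bF card_I.
by move/eqP: ci0; apply; exact: (S_monomials_free Ss D_nonneg s0 Ds_gt0 sum0 i).
Qed.

End StronglyInvariant.

Unset Implicit Arguments.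

Theorem lemma2p3 (R : idomainType) :
  degree_rigid R ->
  (forall (n : nat) (p : mpoly R n), Delta0 p <-> exists r : R, p = @mconst R n r)
  /\ strongly_invariant R.
Proof.
move=> rigid_R; split=> [n p|n S S_subring y S_gen S_free p]; first exact: Delta0_mpoly.
split; first exact: S_mconst.
by case=> r ->; exact: mconst_in_S.
Qed.
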